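(* Let $n\geq 1$ be an integer and let $a,b,x\in\mathbb{C}$. Then $$\sum_{k=0}^{n}\binom{n+k}{2k}C_k x^{2k}(b-x^2)^{n-k}=b\sum_{k=0}^{n-1}\binom{n-1}{k}M_k^{(a,b)}x^k(x^2-ax+b)^{n-1-k},$$ where $C_k$ is the $k$-th Catalan number and $M_k^{(a,b)}$ is the $(a,b)$-Motzkin number defined in the context.
   Context: Let $C_k=\frac{1}{k+1}\binom{2k}{k}$ be the Catalan numbers. For an integer $m\geq 0$ and $a,b\in\mathbb{C}$, the $(a,b)$-Motzkin number is $$M_m^{(a,b)}=\sum_{k=0}^{\lfloor m/2\rfloor}\binom{m}{2k}C_k a^{m-2k}b^k .$$ In particular $M_0^{(a,b)}=1$. *)

From mathcomp Require Import all_boot all_order all_algebra.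
From mathcomp Require Import reals complex.
Set Implicit Arguments. Unset Strict Implicit. Unset Printing Implicit Defensive.
Import GRing.Theory Num.Theory.
Local Open Scope ring_scope.

Definition catalan (k : nat) : nat := ('C(k.*2, k) %/ k.+1)%N.

Definition motzkin {R : pzRingType} (a b : R) (m : nat) : R :=
  \sum_(0 <= k < m./2.+1) ('C(m, k.*2) * catalan k)%:R * a ^+ (m - k.*2) * b ^+ k.

(* Write S_n(X, Y) = sum_k C(n+k, 2k) C_k X^k Y^(n-k), so that the left-hand side is
   S_n(x^2, b - x^2).  The coefficients C(m, 2j) C_j are hypergeometric in m and j,
   which gives three-term recurrences for S_n(X, Y) and for M_m^(a,b); with
   a = 2X + Y and b = X(X + Y) (so a^2 - 4b = Y^2) both S_(n+1)(X, Y) and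
   (X + Y) M_n^(a,b) satisfy the same recurrence, and they agree for n = 0, 1.
   For X = x^2, X + Y = b this gives b M_(n-1)^(x^2+b, b x^2).  The right-hand side
   equals the same thing by the binomial transform
   sum_k C(N, k) M_k^(a,b) x^k y^(N-k) = M_N^(a x + y, b x^2), taken at y = x^2 - a x + b. *)

From mathcomp Require Import all_boot all_order all_algebra.
From mathcomp Require Import reals complex.
From mathcomp Require Import zify ring.
Import GRing.Theory Num.Theory.

Lemma ffactD n l i : n ^_ (l + i) = n ^_ l * (n - l) ^_ i.
Proof.
elim: i => [|i IH]; first by rewrite addn0 muln1.
by rewrite addnS !ffactnSr IH subnDA mulnA.
Qed.

Lemma mul_bin_bin n l k : 'C(n, k + l) * 'C(k + l, l) = 'C(n, l) * 'C(n - l, k).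
Proof.
have lk_gt0 : 0 < l`! * k`! by rewrite muln_gt0 !fact_gt0.
apply/eqP; rewrite -(eqn_pmul2r lk_gt0); apply/eqP.
have := bin_fact (leq_addl k l); rewrite addnK => fact_kl.
by rewrite -mulnA fact_kl bin_ffact addnC ffactD -!bin_ffact; ring.
Qed.

Definition motzkin_coef (m j : nat) : nat := 'C(m, j.*2) * catalan j.

Lemma catalan_mulS j : catalan j * j.+1 = 'C(j.*2, j).
Proof.
have := mul_bin_left j.*2 j; rewrite -addnn addnK addnn => bin_jS.
rewrite /catalan; have -> : 'C(j.*2, j) = j.+1 * ('C(j.*2, j) - 'C(j.*2, j.+1)).
  by rewrite mulnBr bin_jS -mulnBl subSnn mul1n.
by rewrite mulKn // mulnC.
Qed.

Lemma motzkin_coef0 m : motzkin_coef m 0 = 1.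
Proof. by rewrite /motzkin_coef bin0. Qed.

Lemma motzkin_coef_eq0 m j : m < j.*2 -> motzkin_coef m j = 0.
Proof. by move=> lt_m_2j; rewrite /motzkin_coef bin_small. Qed.

Lemma schroeder_coef_eq0 n k : n < k -> motzkin_coef (n + k) k = 0.
Proof. by move=> lt_nk; rewrite motzkin_coef_eq0 // -addnn ltn_add2r. Qed.

Lemma motzkin_coef_fact m j : motzkin_coef m j * (j`! * j.+1`!) = m ^_ j.*2.
Proof.
have := bin_fact (leq_addr j j); rewrite addnK addnn => fact_2j.
by rewrite -bin_ffact -fact_2j -catalan_mulS factS /motzkin_coef; ring.
Qed.

(* Multiplying by (i+1)! (i+2)! turns the four coefficients into m^_(2i) times
   polynomials in m and d = m - 2i. *)
Lemma motzkin_coef_relation m i (c0 c1 c2 c3 : nat) :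
  (forall d, m = i.*2 + d ->
     c0 * (m.+2 * m.+1) + c1 * (d * d.-1) = c2 * (m.+1 * d) + c3 * (i.+1 * i.+2)) ->
  c0 * motzkin_coef m.+2 i.+1 + c1 * motzkin_coef m i.+1
  = c2 * motzkin_coef m.+1 i.+1 + c3 * motzkin_coef m i.
Proof.
move=> rel; pose F := i.+1`! * i.+2`!.
have F_gt0 : 0 < F by rewrite muln_gt0 !fact_gt0.
have fact_i : motzkin_coef m i * F = m ^_ i.*2 * (i.+1 * i.+2).
  by rewrite -motzkin_coef_fact /F !factS; ring.
apply/eqP; rewrite -(eqn_pmul2r F_gt0); apply/eqP.
transitivity (c0 * (motzkin_coef m.+2 i.+1 * F) + c1 * (motzkin_coef m i.+1 * F)).
  by ring.
transitivity (c2 * (motzkin_coef m.+1 i.+1 * F) + c3 * (motzkin_coef m i * F)); last by ring.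
rewrite fact_i !motzkin_coef_fact doubleS !ffactSS !ffactnSr.
have [lt_m_2i | le_2i_m] := ltnP m i.*2; first by rewrite ffact_small // !(mul0n, muln0).
have [d def_m] : exists d, m = i.*2 + d by exists (m - i.*2); rewrite subnKC.
have -> : m - i.*2 = d by lia.
have -> : m - (i.*2).+1 = d.-1 by lia.
move: (_ ^_ _) => Q.
transitivity ((c0 * (m.+2 * m.+1) + c1 * (d * d.-1)) * Q); first by ring.
by rewrite (rel d def_m); ring.
Qed.

Lemma motzkin_coef_rec m j :
  (m + 4) * motzkin_coef m.+2 j + (m + 1) * motzkin_coef m j
  = (2 * m + 5) * motzkin_coef m.+1 j
    + 4 * (m + 1) * (if j is i.+1 then motzkin_coef m i else 0).
Proof.
case: j => [|i]; first by rewrite !motzkin_coef0; lia.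
apply: motzkin_coef_relation => -[|d] ->; rewrite ?addn0 -?addnn; ring.
Qed.

Lemma schroeder_coef_rec n k :
  (n + 3) * motzkin_coef (n.+2 + k) k + n * motzkin_coef (n + k) k
  = (2 * n + 3) * (motzkin_coef (n.+1 + k) k
                   + 2 * (if k is i.+1 then motzkin_coef (n.+1 + i) i else 0)).
Proof.
case: k => [|i]; first by rewrite !motzkin_coef0; lia.
rewrite (addSnnS n i) !addSn mulnDr mulnA; apply: motzkin_coef_relation => -[|d] eq_m.
  by rewrite (_ : i = n.+1); [ring | lia].
by rewrite (_ : n = i + d); [ring | lia].
Qed.

Local Open Scope ring_scope.

Section MotzkinSchroeder.
Context {R : comPzRingType}.
Local Set Implicit Arguments.
Local Unset Strict Implicit.
Implicit Types a b X Y : R.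

Lemma big_nat_widen0 (f : nat -> R) n N :
  (n <= N)%N -> (forall k, (n <= k)%N -> f k = 0) ->
  \sum_(0 <= k < n) f k = \sum_(0 <= k < N) f k.
Proof.
move=> le_nN f0; rewrite (big_nat_widen _ _ _ _ _ le_nN) big_mkcondr /=.
by apply: eq_bigr => k _; case: ltnP => // /f0 ->.
Qed.

Lemma motzkin_wide a b m N : (m < N)%N ->
  motzkin a b m = \sum_(0 <= j < N) (motzkin_coef m j)%:R * a ^+ (m - j.*2) * b ^+ j.
Proof.
move=> lt_mN; apply: big_nat_widen0 => [|j]; rewrite ltn_half_double; first lia.
by move=> /motzkin_coef_eq0 coef0; rewrite -/(motzkin_coef m j) coef0 !mul0r.
Qed.

Lemma mulr_motzkin a b m e N : (m < N)%N ->
  a ^+ e * motzkin a b m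
  = \sum_(0 <= j < N) (motzkin_coef m j)%:R * a ^+ (e + m - j.*2) * b ^+ j.
Proof.
move=> lt_mN; rewrite (motzkin_wide a b lt_mN) mulr_sumr; apply: eq_bigr => j _.
have [le_2j_m | /motzkin_coef_eq0 ->] := leqP j.*2 m; last by rewrite !mul0r mulr0.
by rewrite (addnC e) -addnBAC // exprD; ring.
Qed.

Lemma mulr_motzkin_b a b m N : (m < N)%N ->
  b * motzkin a b m = \sum_(0 <= j < N.+1)
    (if j is i.+1 then motzkin_coef m i else 0)%:R * a ^+ (m.+2 - j.*2) * b ^+ j.
Proof.
move=> lt_mN; rewrite (motzkin_wide a b lt_mN) big_nat_recl // !mul0r add0r mulr_sumr.
by apply: eq_bigr => j _; rewrite doubleS !subSS exprS; ring.
Qed.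

Lemma motzkin_rec a b m :
  (m + 4)%:R * motzkin a b m.+2 + (m + 1)%:R * (a ^+ 2 * motzkin a b m)
  = (2 * m + 5)%:R * (a * motzkin a b m.+1) + (4 * (m + 1))%:R * (b * motzkin a b m).
Proof.
have aM := mulr_motzkin a b 1 (leqnSn m.+2); rewrite expr1 in aM.
rewrite (motzkin_wide a b (ltnSn m.+2)) (mulr_motzkin a b 2 (leqW (leqnSn m.+1))).
rewrite aM (mulr_motzkin_b a b (leqnSn m.+1)) add1n add2n !mulr_sumr -!big_split.
apply: eq_bigr => j _ /=.
transitivity (((m + 4) * motzkin_coef m.+2 j + (m + 1) * motzkin_coef m j)%:R
              * a ^+ (m.+2 - j.*2) * b ^+ j); first by ring.
by rewrite motzkin_coef_rec; ring.
Qed.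

Definition schroeder X Y n :=
  \sum_(0 <= k < n.+1) (motzkin_coef (n + k) k)%:R * X ^+ k * Y ^+ (n - k).

Lemma schroeder_wide X Y n N : (n < N)%N ->
  schroeder X Y n
  = \sum_(0 <= k < N) (motzkin_coef (n + k) k)%:R * X ^+ k * Y ^+ (n - k).
Proof.
by move=> lt_nN; apply: big_nat_widen0 => // k /schroeder_coef_eq0 ->; rewrite !mul0r.
Qed.

Lemma mulr_schroeder X Y n e N : (n < N)%N ->
  Y ^+ e * schroeder X Y n
  = \sum_(0 <= k < N) (motzkin_coef (n + k) k)%:R * X ^+ k * Y ^+ (e + n - k).
Proof.
move=> lt_nN; rewrite (schroeder_wide X Y lt_nN) mulr_sumr; apply: eq_bigr => k _.
have [le_kn | /schroeder_coef_eq0 ->] := leqP k n; last by rewrite !mul0r mulr0.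
by rewrite (addnC e) -addnBAC // exprD; ring.
Qed.

Lemma mulr_schroeder_X X Y n :
  X * schroeder X Y n = \sum_(0 <= k < n.+2)
    (if k is i.+1 then motzkin_coef (n + i) i else 0)%:R * X ^+ k * Y ^+ (n.+1 - k).
Proof.
rewrite big_nat_recl // !mul0r add0r mulr_sumr.
by apply: eq_bigr => k _; rewrite subSS exprS; ring.
Qed.

Lemma schroeder_rec X Y n :
  (n + 3)%:R * schroeder X Y n.+2 + n%:R * (Y ^+ 2 * schroeder X Y n)
  = (2 * n + 3)%:R * ((2%:R * X + Y) * schroeder X Y n.+1).
Proof.
have YS := mulr_schroeder X Y 1 (leqnSn n.+2); rewrite expr1 in YS.
rewrite mulrDl -mulrA mulr_schroeder_X YS (mulr_schroeder X Y 2 (leqW (leqnSn n.+1))).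
rewrite add1n add2n /schroeder !mulr_sumr -!big_split mulr_sumr.
apply: eq_bigr => k _ /=.
transitivity (((n + 3) * motzkin_coef (n.+2 + k) k + n * motzkin_coef (n + k) k)%:R
              * X ^+ k * Y ^+ (n.+2 - k)); first by ring.
by rewrite schroeder_coef_rec; ring.
Qed.

Lemma motzkin_coef_binomial a x y n j :
  \sum_(0 <= k < n.+1)
     ('C(n, k) * motzkin_coef k j)%:R * a ^+ (k - j.*2) * x ^+ k * y ^+ (n - k)
  = (motzkin_coef n j)%:R * x ^+ j.*2 * (a * x + y) ^+ (n - j.*2).
Proof.
have [lt_n_2j | le_2j_n] := ltnP n j.*2.
  rewrite motzkin_coef_eq0 // !mul0r big_nat big1 // => k /andP[_ lt_k_Sn].
  by rewrite motzkin_coef_eq0 ?muln0 ?mul0r //; apply: leq_ltn_trans lt_n_2j.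
rewrite (@big_cat_nat _ _ _ j.*2 0 n.+1 _ _ (leq0n _) (leqW le_2j_n)) /=.
rewrite big_nat big1 ?add0r; last first.
  by move=> k /andP[_ /motzkin_coef_eq0 ->]; rewrite muln0 !mul0r.
rewrite -{1}(add0n j.*2) big_addn subSn // addrC exprDn big_mkord mulr_sumr.
apply: eq_bigr => -[i /= lt_i] _.
have coef : ('C(n, i + j.*2) * motzkin_coef (i + j.*2) j
               = motzkin_coef n j * 'C(n - j.*2, i))%N.
  by rewrite /motzkin_coef mulnA mul_bin_bin mulnAC.
rewrite coef addnK (_ : n - (i + j.*2) = n - j.*2 - i)%N; last by rewrite addnC subnDA.
by rewrite natrM exprD exprMn; ring.
Qed.

Lemma motzkin_binomial a b x y n :
  \sum_(0 <= k < n.+1) ('C(n, k))%:R * motzkin a b k * x ^+ k * y ^+ (n - k)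
  = motzkin (a * x + y) (b * x ^+ 2) n.
Proof.
transitivity (\sum_(0 <= k < n.+1) \sum_(0 <= j < n.+1)
  ('C(n, k))%:R * ((motzkin_coef k j)%:R * a ^+ (k - j.*2) * b ^+ j) * x ^+ k * y ^+ (n - k)).
  apply: eq_big_nat => k /andP[_ lt_k].
  by rewrite (motzkin_wide a b lt_k) mulr_sumr !mulr_suml.
rewrite (motzkin_wide _ _ (ltnSn n)) exchange_big_nat; apply: eq_bigr => j _ /=.
transitivity (b ^+ j * \sum_(0 <= k < n.+1)
  ('C(n, k) * motzkin_coef k j)%:R * a ^+ (k - j.*2) * x ^+ k * y ^+ (n - k)).
  by rewrite mulr_sumr; apply: eq_bigr => k _; rewrite natrM; ring.
by rewrite motzkin_coef_binomial -mul2n exprM [(b * _) ^+ _]exprMn; ring.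
Qed.

End MotzkinSchroeder.

Lemma eq_linrec2 (R : pzRingType) (c p q u v : nat -> R) :
  (forall n, GRing.lreg (c n)) ->
  (forall n, c n * u n.+2 + q n * u n = p n * u n.+1) ->
  (forall n, c n * v n.+2 + q n * v n = p n * v n.+1) ->
  u 0 = v 0 -> u 1 = v 1 -> u =1 v.
Proof.
move=> c_reg rec_u rec_v u0 u1.
suff uv n : u n = v n /\ u n.+1 = v n.+1 by move=> n; case: (uv n).
elim: n => [|n [un un1]] //; split=> //.
by apply: (c_reg n); apply: (addIr (q n * u n)); rewrite rec_u un rec_v un1.
Qed.

Lemma schroeder_motzkin (R : numDomainType) (X Y : R) n :
  schroeder X Y n.+1 = (X + Y) * motzkin (2%:R * X + Y) (X * (X + Y)) n.
Proof.
set a := 2%:R * X + Y; set b := X * (X + Y).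
pose c n : R := (n + 4)%:R; pose p n := (2 * n + 5)%:R * a; pose q n := (n + 1)%:R * Y ^+ 2.
move: n; apply: (@eq_linrec2 _ c p q (fun n => schroeder X Y n.+1)
                                     (fun n => (X + Y) * motzkin a b n)) => [n|n|n||] /=.
- by apply: mulfI; rewrite pnatr_eq0 addn4.
- rewrite /c /p /q -[_ * Y ^+ 2 * _]mulrA -[_ * a * _]mulrA addn1.
  have -> : (n + 4 = n.+1 + 3)%N by lia.
  have -> : (2 * n + 5 = 2 * n.+1 + 3)%N by lia.
  exact: schroeder_rec.
- apply: (addIr ((X + Y) * ((4 * (n + 1))%:R * (b * motzkin a b n)))).
  transitivity ((X + Y) * ((n + 4)%:R * motzkin a b n.+2
                           + (n + 1)%:R * (a ^+ 2 * motzkin a b n))).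
    by rewrite /c /q /a /b; ring.
  by rewrite motzkin_rec /p; ring.
- rewrite /schroeder /motzkin !big_nat_recr // !big_geq //=.
  rewrite -/(motzkin_coef 0 0) (_ : motzkin_coef 2 1 = 1)%N // !motzkin_coef0.
  by rewrite !(subSS, subn0, sub0n); ring.
- rewrite /schroeder /motzkin !big_nat_recr // !big_geq //=.
  rewrite -/(motzkin_coef 1 0) (_ : motzkin_coef 3 1 = 3)%N // (_ : motzkin_coef 4 2 = 2)%N //.
  by rewrite !motzkin_coef0 !(subSS, subn0, sub0n) /a /b; ring.
Qed.

Theorem theorem1p2 (R : realType) (n : nat) (a b x : R[i]) :
  (1 <= n)%N ->
  \sum_(0 <= k < n.+1) ('C(n + k, k.*2) * catalan k)%:R * x ^+ (k.*2) * (b - x ^+ 2) ^+ (n - k)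
  = b * \sum_(0 <= k < n) ('C(n.-1, k))%:R * motzkin a b k * x ^+ k
          * (x ^+ 2 - a * x + b) ^+ (n.-1 - k).
Proof.
case: n => [//|n] _ /=.
transitivity (schroeder (x ^+ 2) (b - x ^+ 2) n.+1).
  by apply: eq_bigr => k _; rewrite -[X in x ^+ X]mul2n exprM.
rewrite schroeder_motzkin motzkin_binomial addrC subrK.
by congr (b * motzkin _ _ n); ring.
Qed.
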